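(* Let $\widehat{\mathcal T}_\bullet,\widehat{\mathcal T}_\star$ be admissible hierarchical meshes and let $\widehat{\mathcal T}_\circ$ be the hierarchical mesh with domains $\widehat\Omega^k_\circ=\widehat\Omega^k_\bullet\cup\widehat\Omega^k_\star$, $k\in\mathbb N_0$ (equivalently $\widehat{\mathcal T}_\circ=\{\widehat T\in\widehat{\mathcal T}_\bullet:\exists\widehat T'\in\widehat{\mathcal T}_\star,\widehat T\subseteq\widehat T'\}\cup\{\widehat T\in\widehat{\mathcal T}_\star:\exists\widehat T'\in\widehat{\mathcal T}_\bullet,\widehat T\subseteq\widehat T'\}$). Then $\widehat{\mathcal T}_\circ$ is admissible, finer than both $\widehat{\mathcal T}_\bullet$ and $\widehat{\mathcal T}_\star$, and $\#\widehat{\mathcal T}_\circ\le\#\widehat{\mathcal T}_\bullet+\#\widehat{\mathcal T}_\star-\#\widehat{\mathcal T}^0$.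
   Context: Parameter domain $\widehat\Omega=(0,1)^d$, $d\ge2$; degrees $p_1,\dots,p_d\ge1$. For each $i$, $\widehat{\mathcal K}^0_i$ is a $p_i$-open knot vector in $[0,1]$ (first $p_i+1$ knots $0$, last $p_i+1$ knots $1$, interior multiplicities $\le p_i$); $\widehat{\mathcal K}^{k+1}_i$ arises from $\widehat{\mathcal K}^k_i$ by inserting each nondegenerate span's midpoint once. $\widehat{\mathcal B}^k$: tensor-product B-splines of degree $(p_1,\dots,p_d)$ for $\widehat{\mathcal K}^k$; $\widehat{\mathcal T}^k$: closed cells of level $k$. A hierarchical mesh is given by closed sets $[0,1]^d=\widehat\Omega^0\supseteq\widehat\Omega^1\supseteq\cdots$, each $\widehat\Omega^k$ ($k\ge1$) a union of cells of $\widehat{\mathcal T}^{k-1}$, eventually empty; mesh $\widehat{\mathcal T}=\bigcup_k\{\widehat T\in\widehat{\mathcal T}^k:\widehat T\subseteq\widehat\Omega^k,\widehat T\not\subseteq\widehat\Omega^{k+1}\}$, ${\rm level}(\widehat T)=k$; hierarchical basis $\widehat{\mathcal H}=\bigcup_k\{\widehat\beta\in\widehat{\mathcal B}^k:{\rm supp}\,\widehat\beta\subseteq\widehat\Omega^k,{\rm supp}\,\widehat\beta\not\subseteq\widehat\Omega^{k+1}\}$. Neighbors $\mathcal N(\widehat T)=\{\widehat T'\in\widehat{\mathcal T}:\exists\widehat\beta\in\widehat{\mathcal H},\widehat T,\widehat T'\subseteq{\rm supp}\,\widehat\beta\}$; the mesh is admissible if $|{\rm level}(\widehat T)-{\rm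 level}(\widehat T')|\le1$ whenever $\widehat T'\in\mathcal N(\widehat T)$. A mesh is finer than another if each of its domains $\widehat\Omega^k$ contains the corresponding domain of the other. *)

From HB Require Import structures.
From mathcomp Require Import all_boot all_order all_algebra.
Set Implicit Arguments. Unset Strict Implicit. Unset Printing Implicit Defensive.
Import Order.TTheory GRing.Theory Num.Theory.
Local Open Scope ring_scope.

Section Hier.
Variable R : realFieldType.

Fixpoint refine (s : seq R) : seq R :=
  match s with
  | a :: ((b :: _) as s') =>
      if a < b then a :: (a + b) / 2%:R :: refine s' else a :: refine s'
  | _ => s
  end.

Definition open_knots (p : nat) (s : seq R) : Prop :=
  [/\ sorted <=%R s,
      take p.+1 s = nseq p.+1 0,
      drop (size s - p.+1) s = nseq p.+1 1
    & forall x : R, 0 < x < 1 -> (count_mem x s <= p)%N].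

Variable d : nat.
Variable p : 'I_d -> nat.
Variable K0 : 'I_d -> seq R.

Definition point := 'I_d -> R.
Definition pset := point -> Prop.
Definition psubset (A B : pset) : Prop := forall x, A x -> B x.

Definition knots (k : nat) (i : 'I_d) : seq R := iter k refine (K0 i).
Definition kn (k : nat) (i : 'I_d) (n : nat) : R := nth 0 (knots k i) n.

Definition is_cell (k : nat) (a : {ffun 'I_d -> nat}) : Prop :=
  forall i, ((a i).+1 < size (knots k i))%N /\ kn k i (a i) < kn k i (a i).+1.
Definition cell_set (k : nat) (a : {ffun 'I_d -> nat}) : pset :=
  fun x => forall i, kn k i (a i) <= x i <= kn k i (a i).+1.

(** Tensor-product B-splines of level k, indexed by multi-index j;
    the B-spline beta_{j_i,p_i} has local knots t_{j_i},...,t_{j_i+p_i+1}. *)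
Definition is_bspl (k : nat) (j : {ffun 'I_d -> nat}) : Prop :=
  forall i, ((j i + p i).+1 < size (knots k i))%N.
Definition supp (k : nat) (j : {ffun 'I_d -> nat}) : pset :=
  fun x => forall i, kn k i (j i) <= x i <= kn k i (j i + p i).+1.

Definition unit_cube : pset := fun x => forall i, 0 <= x i <= 1.

Definition hmesh (Om : nat -> pset) : Prop :=
  [/\ forall x, Om 0%N x <-> unit_cube x,
      forall k, psubset (Om k.+1) (Om k),
      forall k, exists S : {ffun 'I_d -> nat} -> Prop,
          (forall a, S a -> is_cell k a) /\
          (forall x, Om k.+1 x <-> exists a, S a /\ cell_set k a x)
    & exists N, forall k x, (N <= k)%N -> ~ Om k x].

Definition mesh (Om : nat -> pset) (T : nat * {ffun 'I_d -> nat}) : Prop :=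
  [/\ is_cell T.1 T.2, psubset (cell_set T.1 T.2) (Om T.1)
    & ~ psubset (cell_set T.1 T.2) (Om T.1.+1)].
Definition hbasis (Om : nat -> pset) (B : nat * {ffun 'I_d -> nat}) : Prop :=
  [/\ is_bspl B.1 B.2, psubset (supp B.1 B.2) (Om B.1)
    & ~ psubset (supp B.1 B.2) (Om B.1.+1)].
Definition level (T : nat * {ffun 'I_d -> nat}) : nat := T.1.

Definition neighbor (Om : nat -> pset) (T T' : nat * {ffun 'I_d -> nat}) : Prop :=
  mesh Om T' /\ exists B, hbasis Om B /\
     psubset (cell_set T.1 T.2) (supp B.1 B.2) /\
     psubset (cell_set T'.1 T'.2) (supp B.1 B.2).

Definition admissible (Om : nat -> pset) : Prop :=
  forall T T', mesh Om T -> neighbor Om T T' ->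
    (level T <= (level T').+1)%N /\ (level T' <= (level T).+1)%N.

Definition finer (Om1 Om2 : nat -> pset) : Prop :=
  forall k, psubset (Om2 k) (Om1 k).

Definition union_mesh (Om1 Om2 : nat -> pset) : nat -> pset :=
  fun k x => Om1 k x \/ Om2 k x.

Definition mesh0 (T : nat * {ffun 'I_d -> nat}) : Prop :=
  T.1 = 0%N /\ is_cell 0 T.2.

End Hier.

Definition has_card {X : eqType} (A : X -> Prop) (n : nat) : Prop :=
  exists s : seq X, [/\ uniq s, size s = n & forall x, x \in s <-> A x].

From Pilot Require Import Defs.
From HB Require Import structures.
From mathcomp Require Import all_boot all_order all_algebra.
From mathcomp Require Import zify.
From Stdlib Require Import Classical ClassicalEpsilon.
Local Open Scope ring_scope.

(* Let T be an element of the union mesh contained in the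
   support of an active B-spline beta of level k.  Then level T >= k, since
   otherwise T lies in supp beta, in Omega^k and hence in Omega^(level T + 1).
   If level T >= k+2, the centre of T lies in, say, Omega_1^(level T).  Going
   up through parents, beta has an ancestor beta' of level <= k that is active
   in the first mesh; supp beta' contains an element of the first mesh of
   level <= k (where it leaves Omega^(k+1)) as well as one of
   level >= level T (a descendant of T).  These are neighbours whose levels
   differ by at least 2, contradicting admissibility of the first mesh.

   For any hierarchical mesh, #T = #T^0 + sum (#children Q - 1),
   summed over the cells Q of some level k contained in Omega^(k+1): each cell
   of level k+1 in Omega^(k+1) has exactly one parent.  As Omega^(k+1) is a
   union of cells of level k, it contains such a cell Q as soon as it contains
   its centre; hence a cell refined in the union is refined in one of the two
   meshes, and the sum for the union is at most the sum of the two sums. *)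

Section HierarchicalMeshes.
Set Implicit Arguments. Unset Strict Implicit. Unset Printing Implicit Defensive.
Import Order.TTheory GRing.Theory Num.Theory.

Variable R : realFieldType.

Section SortedKnots.
Implicit Types (s t : seq R).

Lemma sorted_nth_le t i j : sorted <=%R t -> (i <= j)%N -> (j < size t)%N ->
  nth 0 t i <= nth 0 t j.
Proof.
move=> st ij js; apply: (sorted_leq_nth le_trans lexx) => //; rewrite inE //.
exact: leq_ltn_trans ij js.
Qed.

Lemma sorted_nth_count t (P : pred R) : sorted <=%R t ->
  (forall x y, x <= y -> P y -> P x) ->
  forall i, (i < size t)%N -> P (nth 0 t i) = (i < count P t)%N.
Proof.
elim: t => [|x t IH] //= st down.
have allx : all (fun y => x <= y) t := order_path_min le_trans st.
case Px: (P x) => /=; first by case=> [|i] //= hi; rewrite IH // (path_sorted st).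
have Pt0 : forall y, y \in t -> ~~ P y.
  by move=> y yt; apply/negP => Py; move: Px; rewrite (down x y) //; move/allP: allx; apply.
have -> : count P t = 0%N by apply/eqP; rewrite -leqn0 leqNgt -has_count; apply/hasPn.
by case=> [|i] //= hi; apply/negbTE/Pt0; rewrite mem_nth.
Qed.

Lemma count_lt_split s v w : v < w ->
  count (fun x => x < w) s =
  addn (count (fun x => x <= v) s) (count (fun x => (v < x) && (x < w)) s).
Proof.
move=> vw; elim: s => //= x s ->.
case: (leP x v) => hx /=; first by rewrite (le_lt_trans hx vw) /= add0n addnA.
by rewrite add0n addnCA.
Qed.

(* a' is the index of the last coarse knot <= t'_a; its right end is placed by
   comparing the numbers of coarse and fine knots in (t'_a, t'_(a+q+1)). *)
Lemma coarse_span_cover t t' q a :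
  sorted <=%R t -> sorted <=%R t' -> (forall P, count P t <= count P t')%N ->
  ((a + q).+1 < size t')%N ->
  nth 0 t' a < nth 0 t' (a + q).+1 -> has (fun x => x <= nth 0 t' a) t ->
  (q < count (fun x => (nth 0 t' a < x)%R) t)%N ->
  exists a', [/\ ((a' + q).+1 < size t)%N, nth 0 t a' <= nth 0 t' a
               & nth 0 t' (a + q).+1 <= nth 0 t (a' + q).+1].
Proof.
move=> st st' cnt sz vw hasv cq.
set v := nth 0 t' a in vw hasv cq *; set w := nth 0 t' (a + q).+1 in vw *.
set c := count (fun x => x <= v) t.
have c1 : (0 < c)%N by rewrite /c -has_count.
have csz : (c + count (fun x => (v < x)%R) t = size t)%N.
  rewrite -(count_predC (fun x => x <= v) t); congr (_ + _)%N.
  by apply: eq_count => x /=; rewrite ltNge.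
have downv : forall x y, x <= y -> (fun x => x <= v) y -> (fun x => x <= v) x.
  by move=> x y xy /= yv; apply: le_trans xy yv.
have downw : forall x y, x <= y -> (fun x => x < w) y -> (fun x => x < w) x.
  by move=> x y xy /= yv; apply: le_lt_trans xy yv.
exists c.-1; split; first lia.
  by rewrite (sorted_nth_count st downv) ?prednK //; lia.
have -> : (c.-1 + q).+1 = (c + q)%N by lia.
rewrite leNgt; apply/negP => hlt.
have h1 : (c + q < count (fun x => (x < w)%R) t)%N.
  by rewrite -(sorted_nth_count st downw) //; lia.
have h2 : (count (fun x => (x < w)%R) t' <= (a + q).+1)%N.
  have := sorted_nth_count st' downw sz.
  by rewrite ltxx => /esym/negbT; rewrite -leqNgt.
have h3 : (a < count (fun x => (x <= v)%R) t')%N.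
  by rewrite -(sorted_nth_count st' downv) //; lia.
move: h1 h2 h3; rewrite !(count_lt_split _ vw) -/c => h1 h2 h3.
have h4 := cnt (fun x => (v < x) && (x < w)).
move: h1 h2 h3 h4; set X := count _ t; set Y := count _ t'; set Z := count _ t'.
lia.
Qed.

Lemma elementary_span_cover t a b y : sorted <=%R t -> (b < size t)%N -> (a < b)%N ->
  nth 0 t a < nth 0 t b -> nth 0 t a <= y <= nth 0 t b ->
  exists n, [/\ (a <= n < b)%N, nth 0 t n < nth 0 t n.+1 & nth 0 t n <= y <= nth 0 t n.+1].
Proof.
move=> st; elim: b => [|b IH] // bs ab hab /andP[ay yb].
have bb : nth 0 t b <= nth 0 t b.+1 by apply: sorted_nth_le.
case: (ltngtP a b) => [ab'|ba|eab]; [|lia|]; last first.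
  by exists b; rewrite -eab in hab ay yb *; split => //; rewrite ?leqnn ?ay ?yb // eab.
have widen n : (a <= n < b)%N -> (a <= n < b.+1)%N by lia.
case: (leP (nth 0 t b) y) => hy.
  case: (ltP (nth 0 t b) (nth 0 t b.+1)) => hb.
    by exists b; split => //; [lia | rewrite hy].
  have eb : nth 0 t b = nth 0 t b.+1 by apply/eqP; rewrite eq_le hb bb.
  have h1 : nth 0 t a < nth 0 t b by rewrite eb.
  have h2 : nth 0 t a <= y <= nth 0 t b by rewrite ay eb.
  have [n [? ? ?]] := IH (ltnW bs) ab' h1 h2.
  by exists n; split => //; apply: widen.
have ha : nth 0 t a < nth 0 t b by apply: le_lt_trans ay hy.
have h2 : nth 0 t a <= y <= nth 0 t b by rewrite ay ltW.
have [n [? ? ?]] := IH (ltnW bs) ab' ha h2.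
by exists n; split => //; apply: widen.
Qed.

Lemma elementary_span_uniq t m n x : sorted <=%R t ->
  (m.+1 < size t)%N -> (n.+1 < size t)%N ->
  nth 0 t n < x < nth 0 t n.+1 -> nth 0 t m <= x <= nth 0 t m.+1 -> m = n.
Proof.
move=> st ms ns /andP[h1 h2] /andP[h3 h4].
case: (ltngtP m n) => // hmn.
  have h := sorted_nth_le st hmn (ltnW ns).
  by have := lt_le_trans (le_lt_trans h h1) h4; rewrite ltxx.
have h := sorted_nth_le st hmn (ltnW ms).
by have := lt_le_trans h2 (le_trans h h3); rewrite ltxx.
Qed.

Lemma fine_span_sub t t' n : sorted <=%R t -> sorted <=%R t' -> {subset t <= t'} ->
  (n.+1 < size t)%N -> nth 0 t n < nth 0 t n.+1 ->
  exists u, [/\ (u.+1 < size t')%N, nth 0 t' u < nth 0 t' u.+1,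
     nth 0 t n <= nth 0 t' u & nth 0 t' u.+1 <= nth 0 t n.+1].
Proof.
move=> st st' sub ns hn.
have m1 : nth 0 t n \in t' by apply: sub; rewrite mem_nth // ltnW.
have m2 : nth 0 t n.+1 \in t' by apply: sub; rewrite mem_nth.
set i1 := index (nth 0 t n) t'; set i2 := index (nth 0 t n.+1) t'.
have i1s : (i1 < size t')%N by rewrite index_mem.
have i2s : (i2 < size t')%N by rewrite index_mem.
have e1 : nth 0 t' i1 = nth 0 t n by rewrite nth_index.
have e2 : nth 0 t' i2 = nth 0 t n.+1 by rewrite nth_index.
have i12 : (i1 < i2)%N.
  rewrite ltnNge; apply/negP => h; have := sorted_nth_le st' h i1s.
  by rewrite e1 e2 leNgt hn.
have hh1 : nth 0 t' i1 < nth 0 t' i2 by rewrite e1 e2.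
have hh2 : nth 0 t' i1 <= nth 0 t' i1 <= nth 0 t' i2 by rewrite lexx e1 e2 ltW.
have [u [/andP[h1 h2] h3 h4]] := elementary_span_cover st' i2s i12 hh1 hh2.
exists u; split => //; first lia.
  by rewrite -e1; apply: sorted_nth_le => //; lia.
by rewrite -e2; apply: sorted_nth_le => //; lia.
Qed.

Lemma refine_cons2 a b s : refine [:: a, b & s] =
  if a < b then [:: a, (a + b) / 2%:R & refine (b :: s)] else a :: refine (b :: s).
Proof. by []. Qed.

Lemma refine_subseq s : subseq s (refine s).
Proof.
elim: s => [|a s IH] //; case: s IH => [|b s'] IH; first by rewrite /= eqxx.
rewrite refine_cons2; case: ifP => _; rewrite /= eqxx //.
by apply: subseq_trans IH (subseq_cons _ _).
Qed.

Lemma refine_path s x : path <=%R x s -> path <=%R x (refine s).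
Proof.
elim: s x => [|a s IH] x //; case: s IH => [|b s'] IH //.
rewrite refine_cons2 => /= /andP[xa /andP[ab pb]].
case: ifP => hab /=.
  have [m1 m2] := midf_le ab.
  by rewrite xa m1 /=; apply: IH => /=; rewrite m2.
by rewrite xa /=; apply: IH => /=; rewrite ab.
Qed.

Lemma refine_sorted s : sorted <=%R s -> sorted <=%R (refine s).
Proof.
case: s => [|a s] // h; apply: (@path_sorted _ _ a); apply: refine_path.
by rewrite /= lexx.
Qed.

Lemma refine_all_itv lo hi s : all (fun x => lo <= x <= hi) s ->
  all (fun x => lo <= x <= hi) (refine s).
Proof.
elim: s => [|a s IH] //; case: s IH => [|b s'] IH //.
rewrite refine_cons2 => /= /andP[ha hb].
have IH' := IH hb; move: hb => /= /andP[hb _].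
case: ifP => hab /=; rewrite ha //= IH' andbT.
move: ha hb => /andP[a0 a1] /andP[b0 b1].
have [m1 m2] := midf_le (ltW hab).
by rewrite (le_trans a0 m1) (le_trans m2 b1).
Qed.

(* The part of [open_knots q] that survives refinement. *)
Definition unit_knots (q : nat) t :=
  [/\ sorted <=%R t, all (fun x => 0 <= x <= 1) t, 0 \in t
    & (q.+1 <= count_mem (1%R : R) t)%N].

Lemma unit_knots_refine q t : unit_knots q t -> unit_knots q (refine t).
Proof.
case=> h1 h2 h3 h4; split.
- exact: refine_sorted.
- exact: refine_all_itv.
- exact: (mem_subseq (refine_subseq t)).
- by apply: leq_trans h4 _; apply: leq_count_subseq; apply: refine_subseq.
Qed.

Lemma open_unit_knots q t : open_knots q t -> unit_knots q t.
Proof.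
case=> st ht hd _.
have szd : size (drop (size t - q.+1) t) = q.+1 by rewrite hd size_nseq.
have szt : (q.+1 <= size t)%N by move: szd; rewrite size_drop; lia.
have n0 : nth 0 t 0 = 0 by rewrite -(nth_take 0 (n0 := q.+1)) // ht nth_nseq.
have n1 : nth 0 t (size t).-1 = 1.
  have := nth_drop (size t - q.+1) 0 t q; rewrite hd nth_nseq ltnSn.
  by have -> : (size t - q.+1 + q = (size t).-1)%N by lia.
split => //.
- apply/allP => x xt; rewrite -(nth_index 0 xt).
  have ix : (index x t < size t)%N by rewrite index_mem.
  have h1 := sorted_nth_le st (leq0n (index x t)) ix; rewrite n0 in h1.
  have h2 := @sorted_nth_le t (index x t) (size t).-1 st ltac:(lia) ltac:(lia).
  by rewrite h1 -n1 h2.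
- have : 0 \in take q.+1 t by rewrite ht mem_nseq ?eqxx ?andbT.
  exact: mem_take.
- rewrite -(cat_take_drop (size t - q.+1) t) count_cat hd count_nseq /= eqxx.
  lia.
Qed.

End SortedKnots.

Variable d : nat.
Variable p : 'I_d -> nat.
Variable K0 : 'I_d -> seq R.
Hypothesis hK : forall i, open_knots (p i) (K0 i).

Local Notation kn := (kn K0).
Local Notation knots := (knots K0).
Local Notation cell := (cell_set K0).
Local Notation supp := (supp p K0).
Local Notation point := (point R d).
Local Notation lcell := (nat * {ffun 'I_d -> nat})%type.

Section Cells.

Lemma knotsS k i : knots k.+1 i = refine (knots k i).
Proof. by rewrite /Defs.knots iterS. Qed.

Lemma unit_knots_level k i : unit_knots (p i) (knots k i).
Proof.
elim: k => [|k IH]; first exact: open_unit_knots (hK i).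
by rewrite knotsS; apply: unit_knots_refine.
Qed.

Lemma knots_sorted k i : sorted <=%R (knots k i).
Proof. by case: (unit_knots_level k i). Qed.

Lemma kn_le k i m n : (m <= n)%N -> (n < size (knots k i))%N -> kn k i m <= kn k i n.
Proof. by move=> mn ns; apply: sorted_nth_le => //; apply: knots_sorted. Qed.

Lemma kn_in01 k i n : (n < size (knots k i))%N -> 0 <= kn k i n <= 1.
Proof.
move=> ns; case: (unit_knots_level k i) => _ /allP h _ _; apply: h; exact: mem_nth.
Qed.

Definition cell_interior k (a : {ffun 'I_d -> nat}) (x : point) :=
  forall i, kn k i (a i) < x i < kn k i (a i).+1.
Definition cell_center k (a : {ffun 'I_d -> nat}) : point :=
  fun i => (kn k i (a i) + kn k i (a i).+1) / 2.

Lemma cell_center_interior k a : is_cell K0 k a -> cell_interior k a (cell_center k a).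
Proof. by move=> c i; have [_ /midf_lt[h1 h2]] := c i; rewrite h1 h2. Qed.

Lemma cell_interior_sub k a x : cell_interior k a x -> cell k a x.
Proof. by move=> h i; have /andP[h1 h2] := h i; rewrite !ltW. Qed.

Lemma cell_lo k a : is_cell K0 k a -> cell k a (fun i => kn k i (a i)).
Proof. by move=> c i; have [_ h] := c i; rewrite lexx ltW. Qed.

Lemma cell_hi k a : is_cell K0 k a -> cell k a (fun i => kn k i (a i).+1).
Proof. by move=> c i; have [_ h] := c i; rewrite lexx ltW. Qed.

Lemma cell_sub_bounds k a l b : is_cell K0 k a -> psubset (cell k a) (cell l b) ->
  forall i, kn l i (b i) <= kn k i (a i) /\ kn k i (a i).+1 <= kn l i (b i).+1.
Proof.
move=> c s i; have /andP[h1 _] := s _ (cell_lo c) i.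
by have /andP[_ h2] := s _ (cell_hi c) i.
Qed.

Lemma cell_interior_subset k a l b x : is_cell K0 k a ->
  psubset (cell k a) (cell l b) -> cell_interior k a x -> cell_interior l b x.
Proof.
move=> c s h i; have [h1 h2] := cell_sub_bounds c s i; have /andP[h3 h4] := h i.
by rewrite (le_lt_trans h1 h3) (lt_le_trans h4 h2).
Qed.

Lemma cell_interior_uniq k a b x : is_cell K0 k a -> is_cell K0 k b ->
  cell_interior k a x -> cell k b x -> a = b.
Proof.
move=> ca cb ia xb; apply/ffunP => i; apply/esym.
have [h1 _] := ca i; have [h2 _] := cb i.
exact: (elementary_span_uniq (knots_sorted k i) h2 h1 (ia i) (xb i)).
Qed.

Lemma hmesh_cell_sub Om k a x : hmesh K0 Om -> is_cell K0 k a -> cell_interior k a x ->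
  Om k.+1 x -> psubset (cell k a) (Om k.+1).
Proof.
case=> _ _ hS _ ca ia Ox.
have [S [S1 S2]] := hS k.
have [b [Sb xb]] := (S2 x).1 Ox.
have eab := cell_interior_uniq ca (S1 b Sb) ia xb; subst b.
by move=> y ya; apply/(S2 y); exists a.
Qed.

Lemma hmesh_mono Om k l : hmesh K0 Om -> (k <= l)%N -> psubset (Om l) (Om k).
Proof.
case=> _ hm _ _; elim: l => [|l IH] kl; first by have -> : k = 0%N by lia.
case: (leqP k l) => h; first by move=> x Ox; apply: (IH h); apply: hm Ox.
by have -> : k = l.+1 by lia.
Qed.

Lemma cell_level_lt Om N k l a : (forall k x, (N <= k)%N -> ~ Om k x) ->
  is_cell K0 k a -> psubset (cell k a) (Om l) -> (l < N)%N.
Proof.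
move=> hN ca s; rewrite ltnNge; apply/negP => Nl.
exact: hN _ _ Nl (s _ (cell_lo ca)).
Qed.

Lemma refine_span_parent k i a q : (q <= p i)%N ->
  ((a + q).+1 < size (knots k.+1 i))%N -> kn k.+1 i a < kn k.+1 i (a + q).+1 ->
  exists a', [/\ ((a' + q).+1 < size (knots k i))%N, kn k i a' <= kn k.+1 i a
               & kn k.+1 i (a + q).+1 <= kn k i (a' + q).+1].
Proof.
move=> qp sz vw.
have [s1 a1 z1 c1] := unit_knots_level k i.
have [s2 a2 _ _] := unit_knots_level k.+1 i.
rewrite /Defs.kn knotsS in sz vw *; rewrite knotsS in s2 a2.
have /allP in01 := a2.
apply: coarse_span_cover => //.
- by move=> P; apply: leq_count_subseq; apply: refine_subseq.
- apply/hasP; exists 0 => //.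
  by have /andP[] := in01 _ (mem_nth 0 (ltac:(lia) : (a < size (refine (knots k i)))%N)).
- have hw : nth 0 (refine (knots k i)) (a + q).+1 <= 1.
    by have /andP[_ ->] := in01 _ (mem_nth 0 sz).
  have hc : (count_mem (1%R : R) (knots k i) <=
     count (fun x => (nth 0 (refine (knots k i)) a < x)%R) (knots k i))%N.
    by apply: sub_count => x /= /eqP ->; exact: lt_le_trans vw hw.
  by apply: leq_trans hc; apply: leq_ltn_trans c1.
Qed.

Lemma parent_cell k a : is_cell K0 k.+1 a ->
  exists b, is_cell K0 k b /\ psubset (cell k.+1 a) (cell k b).
Proof.
move=> ca.
have : forall i, exists n : nat, [/\ (n.+1 < size (knots k i))%N,
    kn k i n <= kn k.+1 i (a i) & kn k.+1 i (a i).+1 <= kn k i n.+1].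
  move=> i; have [h1 h2] := ca i.
  have [n [e1 e2 e3]] := @refine_span_parent k i (a i) 0 (leq0n _)
    ltac:(by rewrite addn0) ltac:(by rewrite addn0).
  by exists n; rewrite !addn0 in e1 e2 e3 *.
case/fin_all_exists => f hf; exists [ffun i => f i]; split.
  move=> i; rewrite ffunE; have [h1 h2 h3] := hf i; split => //.
  have [_ h] := ca i; exact: le_lt_trans h2 (lt_le_trans h h3).
move=> x xa i; rewrite ffunE; have [_ h2 h3] := hf i; have /andP[x1 x2] := xa i.
by rewrite (le_trans h2 x1) (le_trans x2 h3).
Qed.

Lemma child_cell k a : is_cell K0 k a ->
  exists b, is_cell K0 k.+1 b /\ psubset (cell k.+1 b) (cell k a).
Proof.
move=> ca.
have : forall i, exists u : nat, [/\ (u.+1 < size (knots k.+1 i))%N,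
    kn k.+1 i u < kn k.+1 i u.+1, kn k i (a i) <= kn k.+1 i u
  & kn k.+1 i u.+1 <= kn k i (a i).+1].
  move=> i; have [h1 h2] := ca i.
  rewrite /Defs.kn knotsS; apply: fine_span_sub => //.
  - exact: knots_sorted.
  - by rewrite -knotsS; apply: knots_sorted.
  - by move=> x; apply: mem_subseq; apply: refine_subseq.
case/fin_all_exists => f hf; exists [ffun i => f i]; split.
  by move=> i; rewrite ffunE; have [h1 h2 h3 h4] := hf i.
move=> x xa i; have := xa i; rewrite ffunE; have [_ _ h3 h4] := hf i.
by case/andP => x1 x2; rewrite (le_trans h3 x1) (le_trans x2 h4).
Qed.

Lemma mesh_sub_cell Om m a : hmesh K0 Om -> is_cell K0 m a ->
  psubset (cell m a) (Om m) ->
  exists m' b, [/\ (m <= m')%N, mesh K0 Om (m', b) & psubset (cell m' b) (cell m a)].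
Proof.
move=> hm; case: (hm) => _ _ _ [N hN].
suff : forall n m a, (N <= m + n)%N -> is_cell K0 m a -> psubset (cell m a) (Om m) ->
  exists m' b, [/\ (m <= m')%N, mesh K0 Om (m', b) & psubset (cell m' b) (cell m a)].
  by move=> H; apply: (H N) => //; lia.
elim=> [|n IH] {}m {}a hn ca s; first by case: (hN m _ ltac:(lia) (s _ (cell_lo ca))).
case: (classic (psubset (cell m a) (Om m.+1))) => h; last by exists m, a; split.
have [b [cb sb]] := child_cell ca.
have [m' [b' [h1 h2 h3]]] := IH m.+1 b ltac:(lia) cb (fun x xb => h x (sb x xb)).
by exists m', b'; split => //; [lia | move=> x /h3 /sb].
Qed.

End Cells.

Section BSplines.

Definition supp_nondeg k (g : {ffun 'I_d -> nat}) :=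
  forall i, kn k i (g i) < kn k i (g i + p i).+1.

Lemma supp_lo k g : supp_nondeg k g -> supp k g (fun i => kn k i (g i)).
Proof. by move=> h i; rewrite lexx ltW. Qed.

Lemma supp_hi k g : supp_nondeg k g -> supp k g (fun i => kn k i (g i + p i).+1).
Proof. by move=> h i; rewrite lexx ltW. Qed.

Lemma cell_supp_nondeg l a k g : is_cell K0 l a -> psubset (cell l a) (supp k g) ->
  supp_nondeg k g.
Proof.
move=> ca s i; have /andP[h1 _] := s _ (cell_lo ca) i.
have /andP[_ h2] := s _ (cell_hi ca) i.
have [_ h] := ca i; exact: le_lt_trans h1 (lt_le_trans h h2).
Qed.

Lemma supp_nondeg_sub k g k' g' : supp_nondeg k g ->
  psubset (supp k g) (supp k' g') -> supp_nondeg k' g'.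
Proof.
move=> nd s i; have /andP[h1 _] := s _ (supp_lo nd) i.
have /andP[_ h2] := s _ (supp_hi nd) i.
exact: le_lt_trans h1 (lt_le_trans (nd i) h2).
Qed.

Lemma supp_unit_cube k g : is_bspl p K0 k g -> psubset (supp k g) (unit_cube (d:=d)).
Proof.
move=> b x xs i; have /andP[h1 h2] := xs i.
have /andP[l0 _] := kn_in01 (ltac:(have := b i; lia) : (g i < size (knots k i))%N).
have /andP[_ u1] := kn_in01 (b i).
by rewrite (le_trans l0 h1) (le_trans h2 u1).
Qed.

Lemma parent_bspl k g : is_bspl p K0 k.+1 g -> supp_nondeg k.+1 g ->
  exists g', is_bspl p K0 k g' /\ psubset (supp k.+1 g) (supp k g').
Proof.
move=> bg nd.
have : forall i, exists n : nat, [/\ ((n + p i).+1 < size (knots k i))%N,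
   kn k i n <= kn k.+1 i (g i) & kn k.+1 i (g i + p i).+1 <= kn k i (n + p i).+1].
  by move=> i; apply: refine_span_parent; [exact: leqnn | exact: bg | exact: nd].
case/fin_all_exists => f hf; exists [ffun i => f i]; split.
  by move=> i; rewrite ffunE; have [] := hf i.
move=> x xa i; have := xa i; rewrite ffunE; have [_ h2 h3] := hf i.
by case/andP => x1 x2; rewrite (le_trans h2 x1) (le_trans x2 h3).
Qed.

Lemma supp_cell_cover k g y : is_bspl p K0 k g -> supp_nondeg k g -> supp k g y ->
  exists a, [/\ is_cell K0 k a, cell k a y & psubset (cell k a) (supp k g)].
Proof.
move=> bg nd ys.
have : forall i, exists n : nat, [/\ (g i <= n < (g i + p i).+1)%N,
   kn k i n < kn k i n.+1 & kn k i n <= y i <= kn k i n.+1].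
  move=> i; apply: elementary_span_cover;
    [exact: knots_sorted | exact: bg | lia | exact: nd | exact: ys].
case/fin_all_exists => f hf; exists [ffun i => f i]; split.
- by move=> i; rewrite ffunE; have [h1 h2 _] := hf i; split => //; have := bg i; lia.
- by move=> i; rewrite ffunE; have [] := hf i.
- move=> x xa i; have := xa i; rewrite ffunE; have [/andP[e1 e2] _ _] := hf i.
  case/andP => x1 x2; have := bg i => bgi.
  by rewrite (le_trans _ x1) ?(le_trans x2) //; apply: kn_le => //; lia.
Qed.

Lemma hbasis_ancestor Om j g : hmesh K0 Om -> is_bspl p K0 j g -> supp_nondeg j g ->
  ~ psubset (supp j g) (Om j.+1) ->
  exists j' g', [/\ (j' <= j)%N, hbasis p K0 Om (j', g') & psubset (supp j g) (supp j' g')].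
Proof.
move=> hm; elim: j g => [|j IH] g bg nd ns.
  case: (classic (psubset (supp 0 g) (Om 0%N))) => h; first by exists 0%N, g; split => //; split.
  case: hm => h0 _ _ _; case: h => x xs; apply/h0; exact: supp_unit_cube xs.
case: (classic (psubset (supp j.+1 g) (Om j.+1))) => h; first by exists j.+1, g; split => //; split.
have [g' [bg' sg']] := parent_bspl bg nd.
have ns' : ~ psubset (supp j g') (Om j.+1) by move=> hs; apply: h => x /sg' /hs.
have [j' [g'' [h1 h2 h3]]] := IH g' bg' (supp_nondeg_sub nd sg') ns'.
by exists j', g''; split => //; [lia | move=> x /sg' /h3].
Qed.

Lemma hbasis_mesh_cell Om k g : hbasis p K0 Om (k, g) -> supp_nondeg k g ->
  exists a, mesh K0 Om (k, a) /\ psubset (cell k a) (supp k g).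
Proof.
case=> bg s1 s2 nd.
have [y [ys yn]] : exists y, supp k g y /\ ~ Om k.+1 y.
  apply: NNPP => hn; apply: s2 => y ys; apply: NNPP => hy; apply: hn; by exists y.
have [a [ca ya sa]] := supp_cell_cover bg nd ys.
by exists a; split => //; split => //= [x /sa /s1 | hs]; last exact: yn (hs _ ya).
Qed.

Lemma admissible_no_deep_cell Om k g l a : hmesh K0 Om -> admissible p K0 Om ->
  is_bspl p K0 k g -> supp_nondeg k g -> ~ psubset (supp k g) (Om k.+1) ->
  (k.+2 <= l)%N -> is_cell K0 l a -> psubset (cell l a) (supp k g) ->
  ~ Om l (cell_center l a).
Proof.
move=> hm adm bg nd ns kl ca sa Oc.
case: l kl ca sa Oc => [|l] // kl ca sa Oc.
have [P [cP sP]] := parent_cell ca.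
have sPO := hmesh_cell_sub hm cP
  (cell_interior_subset ca sP (cell_center_interior ca)) Oc.
have [m [b [lm mb sb]]] := mesh_sub_cell hm ca (fun x xa => sPO x (sP x xa)).
have [j' [g' [jk hB sg]]] := hbasis_ancestor hm bg nd ns.
have [a' [ma' sa']] := hbasis_mesh_cell hB (supp_nondeg_sub nd sg).
have [|_ ] := adm (j', a') (m, b) ma'; last by rewrite /level /=; lia.
split => //; exists (j', g'); split => //; split => //.
by move=> x /sb /sa /sg.
Qed.

End BSplines.

Section Union.
Variables Om1 Om2 : nat -> pset R d.
Hypotheses (hm1 : hmesh K0 Om1) (hm2 : hmesh K0 Om2).
Local Notation Om := (union_mesh Om1 Om2).

Lemma union_hmesh : hmesh K0 Om.
Proof.
case: hm1 hm2 => a1 b1 c1 [N1 d1] [a2 b2 c2 [N2 d2]]; split.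
- move=> x; split; first by case; [move/a1 | move/a2].
  by move=> h; left; apply/a1.
- by move=> k x [h|h]; [left; apply: b1 | right; apply: b2].
- move=> k; have [S1 [e1 f1]] := c1 k; have [S2 [e2 f2]] := c2 k.
  exists (fun a => S1 a \/ S2 a); split; first by move=> a [/e1|/e2].
  move=> x; split.
    by case=> [/f1 [a [? ?]]|/f2 [a [? ?]]]; exists a; split; by [left|right|].
  by case=> a [[h|h] xa]; [left; apply/f1 | right; apply/f2]; exists a.
- exists (N1 + N2)%N => k x kN [h|h]; [apply: (d1 k x) | apply: (d2 k x)] => //; lia.
Qed.

Lemma union_refined_cell k a : is_cell K0 k a -> psubset (cell k a) (Om k.+1) ->
  psubset (cell k a) (Om1 k.+1) \/ psubset (cell k a) (Om2 k.+1).
Proof.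
move=> ca s; have ic := cell_center_interior ca.
case: (s _ (cell_interior_sub ic)) => h.
  by left; apply: hmesh_cell_sub hm1 ca ic h.
by right; apply: hmesh_cell_sub hm2 ca ic h.
Qed.

Hypotheses (ad1 : admissible p K0 Om1) (ad2 : admissible p K0 Om2).

Lemma union_mesh_level_bound l a k g : mesh K0 Om (l, a) -> hbasis p K0 Om (k, g) ->
  psubset (cell l a) (supp k g) -> (k <= l <= k.+1)%N.
Proof.
move=> [ca s1 s2] [bg t1 t2] sa /=.
have nd := cell_supp_nondeg ca sa.
apply/andP; split.
  rewrite leqNgt; apply/negP => lk; apply: s2 => x /sa /t1.
  exact: (hmesh_mono union_hmesh lk).
rewrite leqNgt; apply/negP => kl.
case: (s1 _ (cell_interior_sub (cell_center_interior ca))) => hc.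
  apply: (admissible_no_deep_cell hm1 ad1 bg nd _ kl ca sa hc).
  by move=> hs; apply: t2 => x /hs; left.
apply: (admissible_no_deep_cell hm2 ad2 bg nd _ kl ca sa hc).
by move=> hs; apply: t2 => x /hs; right.
Qed.

Lemma union_admissible : admissible p K0 Om.
Proof.
move=> [l a] [l' a'] mT [mT' [[k g] [hB [sT sT']]]].
have := union_mesh_level_bound mT hB sT.
have := union_mesh_level_bound mT' hB sT'.
rewrite /level /=; lia.
Qed.

End Union.

Definition asbool (P : Prop) : bool :=
  if excluded_middle_informative P then true else false.

Lemma asboolP P : reflect P (asbool P).
Proof. by rewrite /asbool; case: excluded_middle_informative => h; constructor. Qed.

Lemma has_card_count (X : eqType) (P : X -> Prop) (s : seq X) : uniq s ->
  (forall x, P x -> x \in s) -> has_card P (count (fun x => asbool (P x)) s).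
Proof.
move=> us hs; exists (filter (fun x => asbool (P x)) s); split.
- exact: filter_uniq.
- by rewrite size_filter.
- move=> x; rewrite mem_filter; split; first by case/andP => /asboolP.
  by move=> Px; rewrite (hs _ Px) andbT; apply/asboolP.
Qed.

Lemma has_card_countE (X : eqType) (P : X -> Prop) (s : seq X) n : uniq s ->
  (forall x, P x -> x \in s) -> has_card P n -> n = count (fun x => asbool (P x)) s.
Proof.
move=> us hs [s' [u' <- hs']]; rewrite -size_filter; apply: perm_size.
apply: uniq_perm => //; first exact: filter_uniq.
move=> x; rewrite mem_filter; apply/idP/idP.
  by move/hs' => Px; rewrite (hs _ Px) andbT; apply/asboolP.
by case/andP => /asboolP /hs'.
Qed.

Lemma count_add (T : Type) (a b c : pred T) s :
  (forall x, a x + b x = c x)%N -> (count a s + count b s = count c s)%N.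
Proof. by move=> h; elim: s => //= x s <-; rewrite -(h x); lia. Qed.

Lemma count_sumn (T : Type) (a : pred T) s : count a s = (\sum_(x <- s) a x)%N.
Proof. by rewrite -sum1_count big_mkcond. Qed.

Section Counting.
Local Open Scope nat_scope.

Definition max_knots k := \max_(i < d) size (knots k i).

Definition level_indices k : seq {ffun 'I_d -> nat} :=
  [seq [ffun i => nat_of_ord (f i)] | f : {ffun 'I_d -> 'I_(max_knots k)}
     <- enum {ffun 'I_d -> 'I_(max_knots k)}].

Definition cells_below N : seq lcell :=
  undup [seq (k, a) | k <- iota 0 N, a <- level_indices k].

Lemma cells_below_uniq N : uniq (cells_below N).
Proof. exact: undup_uniq. Qed.

Lemma mem_cells_below N k a : k < N -> is_cell K0 k a -> (k, a) \in cells_below N.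
Proof.
move=> kN ca; rewrite mem_undup.
have h i : a i < max_knots k.
  have [h1 _] := ca i; apply: leq_trans (ltnW h1) _.
  exact: (leq_bigmax (F := fun i => size (knots k i))).
pose g := [ffun i => Ordinal (h i)].
have -> : a = [ffun i => nat_of_ord (g i)] by apply/ffunP => i; rewrite !ffunE.
apply/flattenP; exists [seq (k, b) | b <- level_indices k].
  by apply: map_f; rewrite mem_iota.
by apply: map_f; apply: map_f; rewrite mem_enum.
Qed.

Definition covered Om (u : lcell) := is_cell K0 u.1 u.2 /\ psubset (cell u.1 u.2) (Om u.1).
Definition refined Om (u : lcell) :=
  is_cell K0 u.1 u.2 /\ psubset (cell u.1 u.2) (Om u.1.+1).
Definition child (D u : lcell) :=
  [/\ D.1 = u.1.+1, is_cell K0 D.1 D.2 & psubset (cell D.1 D.2) (cell u.1 u.2)].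
Definition nchildren N (u : lcell) := count (fun D => asbool (child D u)) (cells_below N).

Variables (Om : nat -> pset R d) (N : nat).
Hypotheses (hm : hmesh K0 Om) (hN : forall k x, N <= k -> ~ Om k x).
Local Notation count_in P := (count (fun u => asbool (P u)) (cells_below N)).

Lemma count_mesh_refined :
  count_in (mesh K0 Om) + count_in (refined Om) = count_in (covered Om).
Proof.
have [_ hmono _ _] := hm.
apply: count_add => -[k a].
case: (asboolP (refined Om (k, a))) => [[ca sa]|nr].
  case: (asboolP (mesh K0 Om (k, a))) => [[_ _ []] //|_].
  by case: (asboolP (covered Om (k, a))) => // -[]; split => // x /sa; apply: hmono.
case: (asboolP (mesh K0 Om (k, a))) => [[c1 c2 c3]|nm].
  by case: (asboolP (covered Om (k, a))) => // -[].
case: (asboolP (covered Om (k, a))) => // -[c1 c2].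
by case: nm; split => // hs; apply: nr; split.
Qed.

Lemma count_covered : count_in (covered Om) =
  count_in (mesh0 K0) + count_in (fun u => covered Om u /\ 0 < u.1).
Proof.
have [h0 _ _ _] := hm.
symmetry; apply: count_add => -[[|k] a] /=; last first.
  case: (asboolP (mesh0 K0 (k.+1, a))) => [[] //|_].
  by case: (asboolP (covered Om (k.+1, a))) => h; case: (asboolP (_ /\ _)) => // -[].
case: (asboolP (_ /\ _)) => [[_ //]|_]; rewrite addn0.
case: (asboolP (covered Om (0, a))) => [[ca _]|nc].
  by case: (asboolP (mesh0 K0 (0, a))) => // -[]; split.
case: (asboolP (mesh0 K0 (0, a))) => // -[_ ca]; case: nc; split => // x xa.
apply/h0 => i; have /andP[x1 x2] := xa i; have [l _] := ca i.
have /andP[z0 _] := kn_in01 (ltnW l); have /andP[_ z1] := kn_in01 l.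
by rewrite (le_trans z0 x1) (le_trans x2 z1).
Qed.

Lemma child_parent_uniq D u u' : child D u -> child D u' ->
  is_cell K0 u.1 u.2 -> is_cell K0 u'.1 u'.2 -> u = u'.
Proof.
case: u u' => [k a] [k' a'] [/= e1 c1 s1] [/= e2 c2 s2] ca ca'.
have ek : k = k' by rewrite e1 in e2; case: e2.
subst k'; have ic := cell_center_interior c1.
have i1 := cell_interior_subset c1 s1 ic.
have i2 := cell_interior_subset c1 s2 ic.
by rewrite (cell_interior_uniq ca ca' i1 (cell_interior_sub i2)).
Qed.

Lemma sum_refined_parent D : D \in cells_below N ->
  \sum_(u <- cells_below N) asbool (refined Om u) * asbool (child D u) =
  asbool (covered Om D /\ 0 < D.1).
Proof.
move=> DU; case: (asboolP (covered Om D /\ 0 < D.1)) => [[[cD sD] lD]|nD]; last first.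
  rewrite big1_seq // => u _; rewrite mulnb.
  case: (asboolP (refined Om u)) => [[cu su]|] //.
  case: (asboolP (child D u)) => [[e1 c1 t1]|] //.
  by case: nD; split; [split => // x /t1 /su; rewrite e1 | rewrite e1].
case: D DU cD sD lD => [[|k] a] // DU cD sD _.
have [P [cP sP]] := parent_cell cD.
have sPO := hmesh_cell_sub hm cP
  (cell_interior_subset cD sP (cell_center_interior cD))
  (sD _ (cell_interior_sub (cell_center_interior cD))).
have PU : (k, P) \in cells_below N.
  by apply: mem_cells_below => //; have := cell_level_lt hN cP sPO; lia.
rewrite (eq_big_seq (fun u => (u == (k, P)) : nat)).
  by rewrite -big_mkcond sum1_count count_uniq_mem ?PU // cells_below_uniq.
have cPa : child (k.+1, a) (k, P) by [].
move=> u uU; rewrite mulnb.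
case: (asboolP (refined Om u)) => [[cu su]|nu];
  case: (asboolP (child (k.+1, a) u)) => [hc|nc] /=.
- by rewrite (child_parent_uniq hc cPa cu cP) eqxx.
- by case: eqP => // eu; subst u.
- by case: eqP => // eu; subst u; case: nu.
- by case: eqP => // eu; subst u.
Qed.

Lemma nchildren_gt0 u : refined Om u -> 0 < nchildren N u.
Proof.
case=> cu su; have [b [cb sb]] := child_cell cu.
rewrite /nchildren -has_count; apply/hasP; exists (u.1.+1, b).
  by apply: mem_cells_below => //; exact: cell_level_lt hN cu su.
by apply/asboolP.
Qed.

Lemma count_mesh : count_in (mesh K0 Om) =
  count_in (mesh0 K0) + \sum_(u <- cells_below N) asbool (refined Om u) * (nchildren N u).-1.
Proof.
have children : \sum_(u <- cells_below N) asbool (refined Om u) * nchildren N u =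
    count_in (fun u => covered Om u /\ 0 < u.1).
  rewrite count_sumn (eq_big_seq (fun u =>
    \sum_(D <- cells_below N) asbool (refined Om u) * asbool (child D u))); last first.
    by move=> u _; rewrite /nchildren count_sumn big_distrr.
  by rewrite exchange_big /=; apply: eq_big_seq => D DU; apply: sum_refined_parent.
have split_children : \sum_(u <- cells_below N) asbool (refined Om u) * nchildren N u =
    count_in (refined Om) +
    \sum_(u <- cells_below N) asbool (refined Om u) * (nchildren N u).-1.
  rewrite count_sumn -big_split /=; apply: eq_big_seq => u uU.
  case: (asboolP (refined Om u)) => // ru.
  by have := nchildren_gt0 ru; rewrite !mul1n; lia.
have := count_mesh_refined; rewrite count_covered -children split_children; lia.
Qed.

End Counting.

Section UnionCard.
Local Open Scope nat_scope.

Lemma union_refined_sum_le Om1 Om2 N :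
  hmesh K0 Om1 -> hmesh K0 Om2 ->
  \sum_(u <- cells_below N) asbool (refined (union_mesh Om1 Om2) u) * (nchildren N u).-1
  <= \sum_(u <- cells_below N) asbool (refined Om1 u) * (nchildren N u).-1 +
     \sum_(u <- cells_below N) asbool (refined Om2 u) * (nchildren N u).-1.
Proof.
move=> hm1 hm2; rewrite -big_split /=; apply: leq_sum => u _.
rewrite -mulnDl leq_mul2r; apply/orP; right.
case: (asboolP (refined _ u)) => [[cu su]|] //.
case: (union_refined_cell hm1 hm2 cu su) => h.
  by case: (asboolP (refined Om1 u)) => // -[]; split.
by case: (asboolP (refined Om2 u)) => [_|[]]; [rewrite addn1 | split].
Qed.

Lemma has_card_cells_below (P : lcell -> Prop) N n :
  (forall u, P u -> u.1 < N /\ is_cell K0 u.1 u.2) ->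
  has_card P n <-> n = count (fun u => asbool (P u)) (cells_below N).
Proof.
move=> hP; have inP u : P u -> u \in cells_below N.
  by case: u => k a /hP[kN ca]; apply: mem_cells_below.
split; first exact: has_card_countE (cells_below_uniq N) inP.
by move=> ->; apply: has_card_count (cells_below_uniq N) inP.
Qed.

Lemma mesh_cells_below Om N : (forall k x, N <= k -> ~ Om k x) ->
  forall u, mesh K0 Om u -> u.1 < N /\ is_cell K0 u.1 u.2.
Proof. by move=> hN [k a] [ca sa _]; split => //; exact: cell_level_lt hN ca sa. Qed.

Lemma union_mesh_card Om1 Om2 n1 n2 n0 : hmesh K0 Om1 -> hmesh K0 Om2 ->
  has_card (mesh K0 Om1) n1 -> has_card (mesh K0 Om2) n2 -> has_card (mesh0 K0) n0 ->
  exists n, has_card (mesh K0 (union_mesh Om1 Om2)) n /\ n + n0 <= n1 + n2.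
Proof.
move=> hm1 hm2 c1 c2 c0.
have hm := union_hmesh hm1 hm2.
have [N1 hN1] : exists N, forall k x, N <= k -> ~ Om1 k x by case: hm1.
have [N2 hN2] : exists N, forall k x, N <= k -> ~ Om2 k x by case: hm2.
pose N := (N1 + N2).+1.
have v1 : forall k x, N <= k -> ~ Om1 k x by move=> k x h; apply: hN1; lia.
have v2 : forall k x, N <= k -> ~ Om2 k x by move=> k x h; apply: hN2; lia.
have v : forall k x, N <= k -> ~ union_mesh Om1 Om2 k x.
  by move=> k x h [] ; [apply: v1 | apply: v2].
move/(has_card_cells_below _ (mesh_cells_below v1)): c1 => ->.
move/(has_card_cells_below _ (mesh_cells_below v2)): c2 => ->.
have mesh0_below u : mesh0 K0 u -> u.1 < N /\ is_cell K0 u.1 u.2.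
  by case: u => k a [/= -> ca].
move/(has_card_cells_below _ mesh0_below): c0 => ->.
eexists; split; first exact/(has_card_cells_below _ (mesh_cells_below v)).
rewrite (count_mesh hm1 v1) (count_mesh hm2 v2) (count_mesh hm v).
by have := union_refined_sum_le N hm1 hm2; lia.
Qed.

End UnionCard.

End HierarchicalMeshes.

Theorem mainTheorem10 (R : realFieldType) (d : nat) (hd : (2 <= d)%N)
  (p : 'I_d -> nat) (hp : forall i, (1 <= p i)%N)
  (K0 : 'I_d -> seq R) (hK : forall i, open_knots (p i) (K0 i))
  (Omb Oms : nat -> pset R d) :
  hmesh K0 Omb -> hmesh K0 Oms ->
  admissible p K0 Omb -> admissible p K0 Oms ->
  let Omc := union_mesh Omb Oms in
  [/\ hmesh K0 Omc, admissible p K0 Omc, finer Omc Omb, finer Omc Oms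
    & forall nb ns n0 : nat,
        has_card (mesh K0 Omb) nb -> has_card (mesh K0 Oms) ns ->
        has_card (mesh0 K0) n0 ->
        exists nc : nat, has_card (mesh K0 Omc) nc /\ (nc + n0 <= nb + ns)%N].
Proof.
move=> hb hs ab as_ Omc; split.
- exact: union_hmesh hb hs.
- by apply: union_admissible.
- by move=> k x h; left.
- by move=> k x h; right.
- by move=> nb ns n0; apply: union_mesh_card.
Qed.
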